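(* Let $p$ be a prime and let $n,\alpha$ be positive integers with $n<p^\alpha$. Let $$J=\{\,j\in\mathbb{Z}:\ 1\le j<p^\alpha,\ p^\alpha-n\in\operatorname{cous}(p^\alpha-j)\,\}.$$ For $j\in J$ write $j-1=\sum_{i=0}^{\alpha-1}j_ip^i$ with $0\le j_i<p$. Then $$n=\sum_{j\in J}\ \prod_{i=0}^{\alpha-1}(j_i+1).$$
   Context: For a positive integer $m$ with base-$p$ expansion $m=m_kp^k+m_{k-1}p^{k-1}+\dots+m_0$ ($0\le m_i<p$, $m_k\ne0$), the set of cousins of $m$ is $\operatorname{cous}(m)=\{m_kp^k+\epsilon_{k-1}m_{k-1}p^{k-1}+\dots+\epsilon_0m_0:\ \epsilon_i\in\{1,-1\}\}$. *)

From mathcomp Require Import all_boot all_order all_algebra.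
Set Implicit Arguments. Unset Strict Implicit. Unset Printing Implicit Defensive.
Import GRing.Theory Num.Theory.
Local Open Scope ring_scope.

Definition digit (p i m : nat) : nat := ((m %/ p ^ i) %% p)%N.

Definition topidx (p m : nat) : nat := trunc_log p m.

(* the cousin of m obtained with sign choices eps_0, ..., eps_{k-1}
   (eps i = true means the sign -1) *)
Definition cousin_val (p m : nat) (eps : {ffun 'I_(topidx p m) -> bool}) : int :=
  ((digit p (topidx p m) m * p ^ topidx p m)%N)%:Z
  + \sum_(i < topidx p m) (-1) ^+ (eps i) * ((digit p i m * p ^ i)%N)%:Z.

Definition in_cous (p m : nat) (x : int) : bool :=
  [exists eps : {ffun 'I_(topidx p m) -> bool}, cousin_val eps == x].

From mathcomp Require Import all_boot all_order all_algebra.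
From mathcomp Require Import zify ring.
Set Implicit Arguments. Unset Strict Implicit. Unset Printing Implicit Defensive.
Import GRing.Theory Num.Theory.

(* Write x = q p + r with 0 <= r < p. Peeling off the lowest digit, the
   nonnegative x lies in cous(p m + d) (m > 0) iff either d = r and
   q in cous(m), or r > 0, d = p - r and q + 1 in cous(m); the two cases
   exclude each other because every cousin of m has the parity of m.
   Hence the weighted count
     G_a(x) = sum_(m < p^a) [x in cous(m)] * prod_(i < a) (p - m_i)
   satisfies G_(a+1)(x) = (p - r) G_a(q) + r G_a(q + 1), which is solved by
   G_a(x) = p^a - x.  Taking x = p^alpha - n and m = p^alpha - j, the
   digits of m and j - 1 add up to p - 1, so p - m_i = j_i + 1. *)

Section BaseP.

Variable p : nat.
Hypothesis p_gt1 : (1 < p)%N.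

Lemma p_gt0 : (0 < p)%N. Proof. exact: ltnW. Qed.

Lemma divn_modn_MD x q d : (d < p)%N -> x = (p * q + d)%N ->
  x %/ p = q /\ x %% p = d.
Proof.
move=> hd ->; rewrite mulnC divnMDl ?modnMDl ?divn_small ?modn_small ?addn0 //.
exact: p_gt0.
Qed.

Lemma digit0 m : digit p 0 m = (m %% p)%N.
Proof. by rewrite /digit expn0 divn1. Qed.

Lemma digitS i m : digit p i.+1 m = digit p i (m %/ p).
Proof. by rewrite /digit expnS divnMA. Qed.

Lemma digit0_MD m d : (d < p)%N -> digit p 0 (p * m + d) = d.
Proof. by move=> hd; rewrite digit0 mulnC modnMDl modn_small. Qed.

Lemma digitS_MD i m d : (d < p)%N -> digit p i.+1 (p * m + d) = digit p i m.
Proof. by move=> hd; rewrite digitS; have [-> _] := @divn_modn_MD _ m _ hd erefl. Qed.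

Lemma topidx_small m : (m < p)%N -> topidx p m = 0%N.
Proof. by move=> hm; apply/eqP; rewrite /topidx trunc_log_eq0; lia. Qed.

Lemma topidx_MD m d : (0 < m)%N -> (d < p)%N ->
  topidx p (p * m + d) = (topidx p m).+1.
Proof.
move=> hm hd; rewrite /topidx; apply: trunc_log_eq => //.
have lo := trunc_logP p_gt1 hm; have hi := trunc_log_ltn m p_gt1.
rewrite !(expnS p (trunc_log p m).+1) expnS; apply/andP; split.
  by apply: leq_trans (leq_addr _ _); rewrite leq_mul2l lo orbT.
apply: (@leq_trans (p * m.+1)); first by rewrite mulnS; lia.
by rewrite leq_mul2l -expnS hi orbT.
Qed.

(* [cousin_val] with the leading position k as a free parameter, so that
   removing the lowest digit is a plain recursion on k. *)
Definition cousin_at k m (eps : {ffun 'I_k -> bool}) : int :=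
  ((digit p k m * p ^ k)%N%:Z
   + \sum_(i < k) (-1) ^+ (eps i) * (digit p i m * p ^ i)%N%:Z)%R.

Definition is_cousin_at k m (x : int) :=
  exists eps : {ffun 'I_k -> bool}, cousin_at m eps = x.

Lemma in_cousP m x : reflect (is_cousin_at (topidx p m) m x) (in_cous p m x).
Proof.
apply: (iffP existsP) => [[e /eqP]|[e]]; first by exists e.
by move=> <-; exists e.
Qed.

Lemma cousin_atS k m d (eps : {ffun 'I_k.+1 -> bool}) : (d < p)%N ->
  cousin_at (p * m + d) eps
  = (p%:Z * cousin_at m [ffun i => eps (lift ord0 i)] + (-1) ^+ eps ord0 * d%:Z)%R.
Proof.
move=> hd; rewrite /cousin_at big_ord_recl /= digitS_MD // digit0_MD // muln1.
rewrite mulrDr mulr_sumr [RHS]addrAC -addrA; congr (_ + (_ + _))%R.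
  by rewrite expnS mulnCA PoszM.
apply: eq_bigr => i _; rewrite ffunE /bump /= add1n digitS_MD // expnS mulnCA.
by rewrite PoszM mulrCA.
Qed.

Lemma is_cousin_at0 m x : is_cousin_at 0 m x <-> x = (digit p 0 m)%:Z%R.
Proof.
have E (e : {ffun 'I_0 -> bool}) : cousin_at m e = (digit p 0 m)%:Z%R.
  by rewrite /cousin_at big_ord0 addr0 muln1.
by split=> [[e <-]|->]; [rewrite E | exists [ffun=> false]; rewrite E].
Qed.

Lemma is_cousin_atS k m d x : (d < p)%N ->
  is_cousin_at k.+1 (p * m + d) x <->
  exists y (b : bool), is_cousin_at k m y /\ x = (p%:Z * y + (-1) ^+ b * d%:Z)%R.
Proof.
move=> hd; split.
  case=> e <-; exists (cousin_at m [ffun i => e (lift ord0 i)]), (e ord0).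
  by rewrite cousin_atS //; split=> //; eexists.
case=> y [b [[e' <-] ->]].
exists [ffun i : 'I_k.+1 => if unlift ord0 i is Some j then e' j else b].
rewrite cousin_atS // ffunE unlift_none; congr (_ * cousin_at _ _ + _)%R.
by apply/ffunP => i; rewrite !ffunE liftK.
Qed.

Lemma in_cous_small m x : (m < p)%N -> in_cous p m x = (x == m%:Z%R).
Proof.
move=> hm; have E : is_cousin_at (topidx p m) m x <-> x = m%:Z%R.
  by rewrite topidx_small // is_cousin_at0 digit0 modn_small.
by apply/idP/eqP => [/in_cousP/E | /E/in_cousP].
Qed.

Lemma in_cous_MD m d x : (0 < m)%N -> (d < p)%N ->
  in_cous p (p * m + d) x <->
  exists y (b : bool), in_cous p m y /\ x = (p%:Z * y + (-1) ^+ b * d%:Z)%R.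
Proof.
move=> hm hd; rewrite -(rwP (in_cousP _ _)) topidx_MD // is_cousin_atS //.
by split; case=> y [b [/in_cousP h ->]]; exists y, b.
Qed.

Lemma in_cous_parity m y : in_cous p m y -> exists z : int, y = (m%:Z + 2%:Z * z)%R.
Proof.
elim/ltn_ind: m y => m IH y.
have [hm|hm] := ltnP m p.
  by rewrite in_cous_small // => /eqP ->; exists 0; rewrite mulr0 addr0.
have hq : (0 < m %/ p)%N by rewrite divn_gt0 ?p_gt0.
have hr : (m %% p < p)%N by rewrite ltn_mod p_gt0.
rewrite {1}(divn_eq m p) mulnC => /(in_cous_MD _ hq hr) [y' [b [hy ->]]].
have [|z ->] := IH _ _ _ hy; first by apply: ltn_Pdiv => //; lia.
rewrite {3}(divn_eq m p) PoszD PoszM.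
case: b; rewrite /= ?expr1 ?expr0; last by exists (p%:Z * z)%R; ring.
by exists (p%:Z * z - (m %% p)%:Z)%R; ring.
Qed.

Definition ncous m x := in_cous p m x%:Z%R.

Lemma ncous_succ_excl m q : ~~ (ncous m q && ncous m q.+1).
Proof.
by apply/negP => /andP [/in_cous_parity [z1 h1] /in_cous_parity [z2 h2]]; lia.
Qed.

Lemma ncous_digit0 d x : (d < p)%N ->
  ncous d x = ((d == x %% p) && ncous 0 (x %/ p))
     || [&& (0 < x %% p)%N, d == p - x %% p & ncous 0 (x %/ p).+1].
Proof.
move=> hd; rewrite /ncous !in_cous_small ?p_gt0 // !eqz_nat /= !andbF orbF.
apply/eqP/andP => [->|[/eqP hd' /eqP hq]]; first by rewrite modn_small ?divn_small.
by rewrite (divn_eq x p) hq -hd'.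
Qed.

Lemma ncous_MD m d x : (0 < m)%N -> (d < p)%N ->
  ncous (p * m + d) x = ((d == x %% p) && ncous m (x %/ p))
     || [&& (0 < x %% p)%N, d == p - x %% p & ncous m (x %/ p).+1].
Proof.
move=> hm hd; rewrite /ncous.
have hr : (x %% p < p)%N by rewrite ltn_mod p_gt0.
apply/idP/idP.
  case/(in_cous_MD _ hm hd) => [[n|n] [b [hy]]]; last first.
    by rewrite NegzE; case: b => /=; rewrite ?expr1 ?expr0; lia.
  case: b => /=; rewrite ?expr1 ?expr0 => h; last first.
    have [-> ->] : x %/ p = n /\ x %% p = d by apply: divn_modn_MD => //; lia.
    by rewrite eqxx hy.
  have [d0|dpos] := posnP d.
    have [-> ->] : x %/ p = n /\ x %% p = 0%N by apply: divn_modn_MD; lia.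
    by rewrite d0 eqxx hy.
  have [n' def_n] : exists n', n = n'.+1 by case: n h {hy} => [|n']; [lia | exists n'].
  have [-> ->] : x %/ p = n' /\ x %% p = (p - d)%N.
    by apply: divn_modn_MD; move: h; rewrite def_n; lia.
  apply/orP; right; apply/and3P; split; first by rewrite subn_gt0.
    by rewrite subKn // ltnW.
  by rewrite -def_n.
have hx := divn_eq x p.
case/orP => [/andP [/eqP hd' hy] | /and3P [_ /eqP hd' hy]].
  apply/(in_cous_MD _ hm hd); exists (x %/ p)%:Z%R, false; split=> //.
  by rewrite /= expr0 mul1r hd' {1}hx; lia.
apply/(in_cous_MD _ hm hd); exists (x %/ p).+1%:Z%R, true; split=> //=.
by rewrite expr1 hd' {1}hx; lia.
Qed.

Lemma ncous_lowdigit m d x : (d < p)%N ->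
  ncous (p * m + d) x = ((d == x %% p) && ncous m (x %/ p))
     || [&& (0 < x %% p)%N, d == p - x %% p & ncous m (x %/ p).+1].
Proof.
move=> hd; have [->|hm] := posnP m; last exact: ncous_MD.
by rewrite muln0 add0n ncous_digit0.
Qed.

Definition digit_weight a m := (\prod_(i < a) (p - digit p i m))%N.

Lemma digit_weight_MD a m d : (d < p)%N ->
  digit_weight a.+1 (p * m + d) = ((p - d) * digit_weight a m)%N.
Proof.
move=> hd; rewrite /digit_weight big_ord_recl digit0_MD //; congr (_ * _)%N.
by apply: eq_bigr => i _; rewrite lift0 digitS_MD.
Qed.

Definition cousin_count a x := (\sum_(m < p ^ a) ncous m x * digit_weight a m)%N.

Lemma sum_ord_mul N (f : nat -> nat) :
  (\sum_(m < p * N) f m = \sum_(q < N) \sum_(d < p) f (p * q + d))%N.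
Proof.
elim: N => [|N IH]; first by rewrite muln0 !big_ord0.
rewrite big_ord_recr /= -IH -!(big_mkord xpredT) mulnS addnC.
rewrite (@big_cat_nat _ _ _ (p * N)) ?leq_addr //=; congr (_ + _)%N.
rewrite -{1}(add0n (p * N)) big_addn addKn big_mkord.
by apply: eq_bigr => i _; rewrite addnC.
Qed.

Lemma sum_ord_eq_mul c (g : nat -> nat) : (c < p)%N ->
  (\sum_(d < p) (((d : nat) == c) * g d) = g c)%N.
Proof.
move=> hc; rewrite (bigD1 (Ordinal hc)) //= eqxx mul1n big1 ?addn0 // => i hi.
suff /negbTE -> : (i : nat) != c by rewrite mul0n.
by apply: contraNneq hi => ic; apply/eqP/val_inj.
Qed.

Lemma sum_lowdigit r (a b : bool) : (r < p)%N -> ~~ (a && b) ->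
  (\sum_(d < p) (((d : nat) == r) && a || [&& (0 < r)%N, (d : nat) == p - r & b])
     * (p - d) = (p - r) * a + (0 < r) * (r * b))%N.
Proof.
move=> hr hab.
rewrite (eq_bigr (fun d : 'I_p => ((d : nat) == r) * (a * (p - d)) +
   ((d : nat) == p - r) * (((0 < r) && b) * (p - d))))%N; last first.
  move=> d _; move: hab; case: (_ == r); case: (_ == p - r);
  by case: a; case: b; case: (0 < r)%N; rewrite /= ?mul0n ?mul1n ?addn0.
rewrite big_split /= (@sum_ord_eq_mul r (fun d => a * (p - d))%N) //.
have [->|r_gt0] := posnP r.
  by rewrite big1 => [|i _]; rewrite /= ?mul0n ?muln0 ?addn0 // mulnC.
rewrite (@sum_ord_eq_mul (p - r) (fun d => (true && b) * (p - d))%N); last lia.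
by rewrite subKn ?(ltnW hr) // mul1n mulnC [(r * b)%N]mulnC.
Qed.

Lemma cousin_countS a x :
  cousin_count a.+1 x = ((p - x %% p) * cousin_count a (x %/ p)
                         + (0 < x %% p) * (x %% p * cousin_count a (x %/ p).+1))%N.
Proof.
have hr : (x %% p < p)%N by rewrite ltn_mod p_gt0.
rewrite /cousin_count expnS (sum_ord_mul _ (fun m => ncous m x * digit_weight a.+1 m)%N).
rewrite (eq_bigr (fun q : 'I_(p ^ a) => digit_weight a q * ((p - x %% p) *
    ncous q (x %/ p) + (0 < x %% p) * (x %% p * ncous q (x %/ p).+1)))%N).
  rewrite !big_distrr -big_split /=; apply: eq_bigr => q _.
  by case: (ncous q _) (ncous q _) (0 < _)%N => [] [] []; rewrite /=; lia.
move=> q _; rewrite -(sum_lowdigit hr (ncous_succ_excl q (x %/ p))) big_distrr /=.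
apply: eq_bigr => d _; rewrite digit_weight_MD // ncous_lowdigit //.
by rewrite mulnA mulnC mulnA.
Qed.

Lemma cousin_count_recurrence_sol N q r : (0 < N)%N -> (r < p)%N ->
  ((p - r) * (N - q) + (0 < r) * (r * (N - q.+1)) = p * N - (q * p + r))%N.
Proof.
move=> hN hr; have [->|r_gt0] := posnP r.
  by rewrite subn0 mul0n !addn0 mulnBr (mulnC q p).
rewrite mul1n; have [hq|hq] := leqP N q.
  have /eqP -> : (N - q == 0)%N by rewrite subn_eq0.
  have /eqP -> : (N - q.+1 == 0)%N by rewrite subn_eq0 ltnW.
  rewrite !muln0; apply/esym/eqP; rewrite subn_eq0; apply: leq_trans (leq_addr _ _).
  by rewrite mulnC leq_mul2r hq orbT.
have [k ->] : exists k, N = (q + k.+1)%N by exists (N - q.+1)%N; lia.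
rewrite addKn addnS subSS addKn mulnBl mulnS [(r * k)%N]mulnC.
have : (r < p * k.+1)%N by rewrite mulnS; lia.
rewrite mulnC; nia.
Qed.

Lemma cousin_countE a x : cousin_count a x = (p ^ a - x)%N.
Proof.
elim: a x => [|a IH] x.
  rewrite /cousin_count big_ord1 /digit_weight big_ord0 muln1 /ncous.
  by rewrite in_cous_small ?p_gt0 //; case: x.
rewrite cousin_countS !IH expnS.
by rewrite cousin_count_recurrence_sol ?expn_gt0 ?p_gt0 ?ltn_mod ?p_gt0 -?divn_eq.
Qed.

Lemma succ_sum_eq_mul N x1 y1 x0 y0 : (x0 < p)%N -> (y0 < p)%N ->
  (x1 * p + x0 + (y1 * p + y0) + 1 = p * N)%N ->
  (x0 + y0 + 1 = p)%N /\ (x1 + y1 + 1 = N)%N.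
Proof.
move=> hx0 hy0 h.
have hi : (x1 + y1 + 1 = N)%N.
  have [lt|gt|//] := ltngtP (x1 + y1 + 1) N.
    have : ((x1 + y1 + 2) * p <= N * p)%N by rewrite leq_mul2r; apply/orP; right; lia.
    by rewrite !mulnDl (mulnC N p); lia.
  have : (N * p <= (x1 + y1) * p)%N by rewrite leq_mul2r; apply/orP; right; lia.
  by rewrite !mulnDl (mulnC N p); lia.
by split=> //; move: h; rewrite -hi !mulnDr muln1 (mulnC p x1) (mulnC p y1); lia.
Qed.

Lemma digit_compl a x y : (x + y + 1 = p ^ a)%N ->
  forall i, (i < a)%N -> (digit p i x + digit p i y + 1 = p)%N.
Proof.
elim: a x y => [//|a IH] x y; rewrite expnS => hxy.
have [hlo hhi] : (x %% p + y %% p + 1 = p)%N /\ (x %/ p + y %/ p + 1 = p ^ a)%N.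
  apply: (succ_sum_eq_mul (x1 := x %/ p) (y1 := y %/ p)); rewrite ?ltn_mod ?p_gt0 //.
  by rewrite -!divn_eq.
by case=> [|i] hi; rewrite ?digit0 ?digitS //; apply: IH.
Qed.

Lemma digit_weight_compl a j : (0 < j <= p ^ a)%N ->
  digit_weight a (p ^ a - j) = (\prod_(i < a) (digit p i j.-1).+1)%N.
Proof.
move=> /andP [j_gt0 j_le]; apply: eq_bigr => i _.
have sum_eq : (p ^ a - j + j.-1 + 1 = p ^ a)%N.
  by rewrite -addnA addn1 prednK // subnK.
by rewrite -{1}(digit_compl sum_eq (ltn_ord i)) -addnA addKn addn1.
Qed.

End BaseP.

Theorem mainTheorem10 (p n alpha : nat) :
  prime p -> (0 < n)%N -> (0 < alpha)%N -> (n < p ^ alpha)%N ->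
  n = (\sum_(1 <= j < p ^ alpha | in_cous p (p ^ alpha - j) (p ^ alpha - n)%N%:Z)
         \prod_(i < alpha) (digit p i j.-1).+1)%N.
Proof.
move=> /prime_gt1 p_gt1 _ _ n_lt.
rewrite -[in LHS](subKn (ltnW n_lt)) -(cousin_countE p_gt1) /cousin_count.
rewrite -(big_mkord xpredT (fun m => ncous p m (p ^ alpha - n) * digit_weight p alpha m)%N).
rewrite big_ltn ?(leq_ltn_trans _ n_lt) // {1}/ncous in_cous_small ?p_gt0 //.
rewrite eqz_nat subn_eq0 leqNgt n_lt mul0n add0n big_nat_rev [in RHS]big_mkcond /=.
apply: eq_big_nat => j /andP [j_gt0 j_lt]; rewrite add1n subSS /ncous.
by case: in_cous; rewrite ?mul0n // mul1n digit_weight_compl // j_gt0 ltnW.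
Qed.
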